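(* Let $k\ge 2$ and let $\mathcal{C}$ be the full flag code on $\mathbb{F}_q^{2k}$ constructed from a $k$-spread as described in the context. Let $\mathcal{F}=(\mathcal{F}_1,\ldots,\mathcal{F}_{2k-1})\in\mathcal{C}$ and let $\mathcal{X}=(\mathcal{X}_1,\ldots,\mathcal{X}_{2k-1})$ be a sequence of subspaces with $\mathcal{X}_i\subseteq\mathcal{F}_i$ for all $i$ and $\mathcal{X}_1=\cdots=\mathcal{X}_k=\{0\}$. If $\sum_{i=1}^{2k-1}d_S(\mathcal{F}_i,\mathcal{X}_i)\le k^2-1$, then there exists an index $i$ with $k<i<2k$ such that $\dim\mathcal{X}_i>2(i-k)$.
   Context: $q$ is a prime power; $d_S(\mathcal{U},\mathcal{V})=\dim(\mathcal{U}+\mathcal{V})-\dim(\mathcal{U}\cap\mathcal{V})$. Construction: let $\{\mathcal{S}_1,\ldots,\mathcal{S}_{q^k+1}\}$ be a $k$-spread of $\mathbb{F}_q^{2k}$ (a set of $q^k+1$ $k$-dimensional subspaces pairwise intersecting trivially), with full-rank $k\times 2k$ generator matrices $\mathrm{S}_i$. Let $\mathrm{W}_i=\begin{pmatrix}\mathrm{S}_i\\ \mathrm{S}_{i+1}\end{pmatrix}$ for $i\le q^k$ and $\mathrm{W}_{q^k+1}=\begin{pmatrix}\mathrm{S}_{q^k+1}\\ \mathrm{S}_1\end{pmatrix}$, let $\mathcal{W}_i^{(j)}$ be the row space of the first $j$ rows of $\mathrm{W}_i$, and $\mathcal{C}=\{(\mathcal{W}_i^{(1)},\ldots,\mathcal{W}_i^{(2k-1)}):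 1\le i\le q^k+1\}$. *)

From HB Require Import structures.
From mathcomp Require Import all_boot all_algebra all_field.
Set Implicit Arguments. Unset Strict Implicit. Unset Printing Implicit Defensive.
Import GRing.Theory.
Local Open Scope ring_scope.

(* Subspaces of F^n are represented (mathcomp mxalgebra style) by the row
   spaces of matrices with n columns; dimension is \rank. *)

Definition subspace_dist (F : fieldType) (m1 m2 n : nat)
  (U : 'M[F]_(m1, n)) (V : 'M[F]_(m2, n)) : nat :=
  (\rank (U + V)%MS - \rank (U :&: V)%MS)%N.

Definition is_spread (F : fieldType) (k N : nat) (S : 'I_N -> 'M[F]_(k, k + k)) :=
  (forall i, \rank (S i) = k) /\
  (forall i j, i != j -> (S i :&: S j)%MS = 0).

Definition spreadW (F : fieldType) (k N : nat) (S : 'I_N.+1 -> 'M[F]_(k, k + k))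
  (i : 'I_N.+1) : 'M[F]_(k + k, k + k) :=
  col_mx (S i) (S (ordS i)).

Definition first_rows (F : fieldType) (m n : nat) (j : nat) (W : 'M[F]_(m, n))
  : 'M[F]_(m, n) :=
  \matrix_(r, c) (if (r < j)%N then W r c else 0).

Definition flag_code_elt (F : fieldType) (k N : nat) (S : 'I_N.+1 -> 'M[F]_(k, k + k))
  (i : 'I_N.+1) (j : nat) : 'M[F]_(k + k, k + k) :=
  first_rows j (spreadW S i).

(** F_j is spanned by the first j rows of W_i, which is invertible because its
    two blocks span distinct, hence complementary, spread elements; so
    dim F_j = j and d_S(F_j, X_j) >= j - dim X_j.  If dim X_j <= 2(j - k) for
    all k < j < 2k, this gives d_S(F_j, X_j) >= min(j, 2k - j) for every j
    (X_j = 0 for j <= k), and these minima sum to k^2 > k^2 - 1. *)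
From HB Require Import structures.
From mathcomp Require Import all_boot all_algebra all_field.
From mathcomp Require Import zify.
Import GRing.Theory.

Set Implicit Arguments.
Unset Strict Implicit.
Unset Printing Implicit Defensive.

Lemma ordS_neq n (i : 'I_n) : (1 < n)%N -> ordS i != i.
Proof.
move=> n_gt1; apply/eqP => /(congr1 val) /=; move: (val i) (ltn_ord i) => a.
rewrite leq_eqVlt => /predU1P [Sa_n | lt_Sa_n].
  by rewrite -Sa_n modnn; lia.
by rewrite modn_small //; lia.
Qed.

Lemma first_rows_pid_mx (F : fieldType) m n j (W : 'M[F]_(m, n)) :
  first_rows j W = (pid_mx j *m W)%R.
Proof.
apply/matrixP => r c; rewrite !mxE (bigD1 r) //= big1 ?addr0 => [|l /negbTE nlr].
  by rewrite mxE eqxx; case: (r < j)%N; rewrite ?mul1r ?mul0r.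
by rewrite mxE eq_sym (inj_eq val_inj) nlr mul0r.
Qed.

Lemma rank_first_rows (F : fieldType) m n j (W : 'M[F]_(m, n)) :
  row_free W -> (j <= m)%N -> \rank (first_rows j W) = j.
Proof. by move=> freeW le_jm; rewrite first_rows_pid_mx mxrankMfree // rank_pid_mx. Qed.

Lemma rank_col_mx_disjoint (F : fieldType) m1 m2 n
    (A : 'M[F]_(m1, n)) (B : 'M[F]_(m2, n)) :
  (A :&: B)%MS = 0%R -> \rank (col_mx A B) = (\rank A + \rank B)%N.
Proof. by move=> capAB; rewrite -(addsmxE A B).1 mxrank_disjoint_sum. Qed.

Lemma subspace_dist_ge (F : fieldType) m1 m2 n
    (U : 'M[F]_(m1, n)) (V : 'M[F]_(m2, n)) :
  (\rank U - \rank V <= subspace_dist U V)%N.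
Proof.
rewrite /subspace_dist.
have := mxrankS (addsmxSl U V); have := mxrankS (capmxSr U V); lia.
Qed.

Lemma sum_tent k : (\sum_(0 <= j < k + k) minn j (k + k - j))%N = (k ^ 2)%N.
Proof.
rewrite big_mkord big_split_ord /= -big_split /= (eq_bigr (fun=> k)) => [|i _].
  by rewrite sum_nat_const card_ord.
by have := ltn_ord i; lia.
Qed.

Section SpreadFlagCode.

Variables (F : fieldType) (k N : nat) (S : 'I_N.+1 -> 'M[F]_(k, k + k)).
Hypotheses (N_gt0 : (0 < N)%N) (spreadS : is_spread S).

Lemma row_free_spreadW i : row_free (spreadW S i).
Proof.
have [rankS capS] := spreadS.
by rewrite /row_free /spreadW rank_col_mx_disjoint ?capS 1?eq_sym ?ordS_neq // !rankS.
Qed.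

Lemma rank_flag_code_elt i j :
  (j <= k + k)%N -> \rank (flag_code_elt S i j) = j.
Proof. exact/rank_first_rows/row_free_spreadW. Qed.

End SpreadFlagCode.

Local Open Scope ring_scope.

Theorem lemma4p12 (F : finFieldType) (q k : nat)
  (hq : #|{: F}| = q) (hk : (2 <= k)%N)
  (S : 'I_(q ^ k).+1 -> 'M[F]_(k, k + k))
  (hS : is_spread S)
  (i : 'I_(q ^ k).+1)
  (X : nat -> 'M[F]_(k + k))
  (hsub : forall j, (1 <= j <= (k + k).-1)%N -> (X j <= flag_code_elt S i j)%MS)
  (hzero : forall j, (1 <= j <= k)%N -> X j = 0)
  (hdist : (\sum_(1 <= j < k + k) subspace_dist (flag_code_elt S i j) (X j)
              <= k ^ 2 - 1)%N) :
  exists j : nat, [/\ (k < j)%N, (j < k + k)%N & (2 * (j - k) < \rank (X j))%N].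
Proof.
have qk_gt0 : (0 < q ^ k)%N.
  by rewrite expn_gt0 -hq; apply/orP; left; apply/card_gt0P; exists 0.
have [/existsP [j /andP [lt_kj big_Xj]] | /existsPn small_X] :=
  boolP [exists j : 'I_(k + k), (k < j) && (2 * (j - k) < \rank (X j))]%N.
  by exists j.
have tent_le_dist j : (1 <= j < k + k)%N ->
    (minn j (k + k - j) <= subspace_dist (flag_code_elt S i j) (X j))%N.
  move=> /andP [j_ge1 lt_j_2k]; apply: leq_trans _ (subspace_dist_ge _ _).
  rewrite (rank_flag_code_elt qk_gt0 hS i (ltnW lt_j_2k)).
  have [le_jk | lt_kj] := leqP j k; first by rewrite hzero ?j_ge1 // mxrank0; lia.
  by have := small_X (Ordinal lt_j_2k); rewrite /= lt_kj -leqNgt; lia.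
have tent_sum : (\sum_(1 <= j < k + k) minn j (k + k - j))%N = (k ^ 2)%N.
  by rewrite -(sum_tent k) [in RHS]big_ltn ?min0n //; lia.
suff : (k ^ 2 <= k ^ 2 - 1)%N by rewrite leqNgt ltn_subrL expn_gt0 (ltnW hk).
rewrite -{1}tent_sum; apply: leq_trans hdist; rewrite !big_nat.
exact: leq_sum tent_le_dist.
Qed.
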